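(* Let $\mathcal{F}\subseteq\mathcal{P}(\omega)$ be a free filter and let $D,E\subseteq(-1,1)^\omega$ be countable sets. Then there exists a homeomorphism $h\colon Q\to Q$ of $Q=[-1,1]^\omega$ such that $h[C_\mathcal{F}]=C_\mathcal{F}$, $h[(-1,1)^\omega]=(-1,1)^\omega$, and for all $d\in D$, $e\in E$ and $n\in\omega$, $h(d)(n)\ne e(n)$.
   Context: A filter on $\omega$ is free if it contains all cofinite sets. $Q=[-1,1]^\omega$ has the product topology and $Q^\circ=(-1,1)^\omega$. $K_\mathcal{F}=\{f\in Q:\forall m\in\omega\ \{n\in\omega:|f(n)|<2^{-m}\}\in\mathcal{F}\}$ and $C_\mathcal{F}=K_\mathcal{F}\cap Q^\circ$. *)

From mathcomp Require Import all_boot all_order all_algebra.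
From mathcomp Require Import all_classical all_reals all_analysis.
Unset Printing Implicit Defensive.
Import Order.TTheory GRing.Theory Num.Theory numFieldNormedType.Exports.
Local Open Scope classical_set_scope.
Local Open Scope ring_scope.

Definition is_filter (F : set (set nat)) : Prop :=
  [/\ F setT, ~ F set0,
      (forall A B, F A -> A `<=` B -> F B) &
      (forall A B, F A -> F B -> F (A `&` B))].

Definition is_free_filter (F : set (set nat)) : Prop :=
  is_filter F /\ (forall A : set nat, finite_set (~` A) -> F A).

(* The space R^omega with the product topology. *)
Notation Rw R := ({ptws nat -> R}) (only parsing).

Definition Qcube (R : realType) : set (Rw R) :=
  [set f | forall n, -1 <= f n <= 1].
Definition Qopen (R : realType) : set (Rw R) :=
  [set f | forall n, -1 < f n < 1].

Definition KF (R : realType) (F : set (set nat)) : set (Rw R) :=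
  [set f | Qcube R f /\
           forall m : nat, F [set n | `|f n| < (2 ^- m : R)]].
Definition CF (R : realType) (F : set (set nat)) : set (Rw R) :=
  KF R F `&` Qopen R.

Definition homeomorphism_on {T : topologicalType} (A : set T) (h : T -> T) :=
  [/\ {within A, continuous h}, (forall x, A x -> A (h x)) &
      exists g : T -> T,
        [/\ {within A, continuous g}, (forall x, A x -> A (g x)),
            (forall x, A x -> g (h x) = x) & (forall x, A x -> h (g x) = x)]].

From mathcomp Require Import all_boot all_order all_algebra.
From mathcomp Require Import all_classical all_reals all_analysis.
From mathcomp Require Import ring lra.
Import Order.TTheory GRing.Theory Num.Theory numFieldNormedType.Exports.
Local Open Scope classical_set_scope.
Local Open Scope ring_scope.

(* Coordinate n is moved by x |-> x + t_n (1 - |x|), an increasing self-map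
   of [-1, 1] fixing -1 and 1 and moving no point by more than t_n.  With
   t_n < 2^-n membership in K_F is unchanged, because F contains the cofinite
   sets.  The map sends d(n) to e(n) only for t_n = (e(n) - d(n)) / (1 - |d(n)|),
   so each t_n can avoid these countably many values. *)

Lemma continuous_ptws_map {U : topologicalType} {V : uniformType}
    (k : U -> V -> V) : (forall u, continuous (k u)) ->
  continuous (fun f : {ptws U -> V} => (fun u => k u (f u)) : {ptws U -> V}).
Proof.
move=> kc f; apply/(@pointwise_cvgP U V (_ @ nbhs f)) => u.
apply: continuous_comp (kc u (f u)).
exact: (@pointwise_cvgP U V (nbhs f) f _).1 (@cvg_id _ (nbhs f)) u.
Qed.

Section Push.
Context {R : realFieldType}.
Implicit Types t x y : R.

Definition push t x := x + t * (1 - `|x|).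

(* (y - t) / (1 - t) for y >= t and (y - t) / (1 + t) for y < t *)
Definition push_inv t y := ((y - t) + t * `|y - t|) / (1 - t ^+ 2).

Lemma continuous_push t : continuous (push t).
Proof.
move=> x; apply: cvgD; first exact: cvg_id.
by apply: cvgM; [exact: cvg_cst | apply: cvgB; [exact: cvg_cst | exact: cvg_norm]].
Qed.

Lemma continuous_push_inv t : continuous (push_inv t).
Proof.
move=> y; apply: cvgM; last exact: cvg_cst.
have cvg_sub : (fun z => z - t) @ y --> y - t.
  by apply: cvgB; [exact: cvg_id | exact: cvg_cst].
by apply: cvgD => //; apply: cvgM; [exact: cvg_cst | exact: cvg_norm].
Qed.

Lemma push_eq t x y : `|x| < 1 -> push t x = y -> t = (y - x) / (1 - `|x|).
Proof. by move=> x1 <-; rewrite /push; field; rewrite subr_eq0 gt_eqF. Qed.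

Lemma dist_push t x : 0 <= t -> `|x| <= 1 -> `|push t x - x| <= t.
Proof.
move=> t0 x1; rewrite /push addrC addKr ger0_norm ?mulr_ge0 ?subr_ge0 //.
by rewrite ler_piMr // lerBlDr lerDl.
Qed.

Variable t : R.
Hypothesis t01 : 0 <= t < 1.

Let sqr_t_neq1 : 1 - t ^+ 2 != 0.
Proof. by have [t0 t1] := andP t01; rewrite subr_eq0 eq_sym lt_eqF //; nra. Qed.

Lemma pushK : cancel (push t) (push_inv t).
Proof.
have [t0 t1] := andP t01.
move=> x; rewrite /push_inv /push; case: (leP 0 x) => x0.
  rewrite (ger0_norm x0) (_ : _ - t = x * (1 - t)); last by ring.
  by rewrite ger0_norm; [field | nra].
rewrite (ltr0_norm x0) (_ : _ - t = x * (1 + t)); last by ring.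
by rewrite ler0_norm; [field | nra].
Qed.

Lemma push_invK : cancel (push_inv t) (push t).
Proof.
have [t0 t1] := andP t01.
have t_neq1 : 1 - t != 0 by rewrite subr_eq0 eq_sym lt_eqF.
have t_neqN1 : 1 + t != 0 by rewrite gt_eqF //; lra.
move=> y; rewrite /push_inv /push; case: (leP t y) => yt.
  rewrite (@ger0_norm _ (y - t)) ?subr_ge0 //.
  rewrite (_ : _ / _ = (y - t) / (1 - t)); last by field; rewrite ?t_neq1 ?t_neqN1.
  by rewrite ger0_norm; [field | rewrite divr_ge0 ?subr_ge0 // ltW].
rewrite (@ltr0_norm _ (y - t)) ?subr_lt0 //.
rewrite (_ : _ / _ = (y - t) / (1 + t)); last by field; rewrite ?t_neq1 ?t_neqN1.
by rewrite ltr0_norm; [field | rewrite pmulr_llt0 ?invr_gt0 ?subr_lt0 //; lra].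
Qed.

Lemma push_lt_homo : {homo push t : x y / x < y}.
Proof.
have [t0 t1] := andP t01.
move=> x y xy; rewrite /push -subr_gt0.
have : `|y| - `|x| <= y - x by rewrite (le_trans (lerB_dist _ _)) // gtr0_norm ?subr_gt0.
nra.
Qed.

Lemma push_le_mono : {mono push t : x y / x <= y}.
Proof. exact/le_mono/push_lt_homo. Qed.

Lemma push_lt_mono : {mono push t : x y / x < y}.
Proof. exact/leW_mono/push_le_mono. Qed.

Lemma pushN1 : push t (-1) = -1.
Proof. by rewrite /push normrN normr1 subrr mulr0 addr0. Qed.

Lemma push1 : push t 1 = 1.
Proof. by rewrite /push normr1 subrr mulr0 addr0. Qed.

Lemma push_itvcc x : (-1 <= push t x <= 1) = (-1 <= x <= 1).
Proof. by rewrite -{1}pushN1 -{2}push1 !push_le_mono. Qed.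

Lemma push_itvoo x : (-1 < push t x < 1) = (-1 < x < 1).
Proof. by rewrite -{1}pushN1 -{2}push1 !push_lt_mono. Qed.

End Push.

Lemma free_filter_gt {F} m : is_free_filter F -> F [set n | (m < n)%N].
Proof.
move=> [_ Fcof]; apply: Fcof; apply: sub_finite_set (finite_II m.+1) => n /=.
by move/negP; rewrite -leqNgt ltnS.
Qed.

Lemma KF_perturb {R : realType} {F} {f g : Rw R} : is_free_filter F ->
  KF R F f -> Qcube R g -> (forall n, `|g n - f n| <= 2 ^- n) -> KF R F g.
Proof.
move=> Ffree [_ Ff] Qg gf; split=> // m.
have [[_ _ FS FI] _] := Ffree.
move: (FI _ _ (Ff m.+1) (free_filter_gt m Ffree)) => /FS; apply=> n /= [fn mn].
have half_ge0 : (0 : R) <= 2^-1 by rewrite invr_ge0.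
have half_le1 : (2^-1 : R) <= 1 by rewrite invf_le1 ?ler1n.
have gfn : `|g n - f n| <= 2 ^- m.+1.
  by apply: le_trans (gf n) _; rewrite -!exprVn ler_wiXn2l ?half_ge0.
have -> : (2 ^- m : R) = 2 ^- m.+1 + 2 ^- m.+1.
  by rewrite exprS invfM; field.
have := ler_normD (g n - f n) (f n); rewrite subrK; lra.
Qed.

Lemma exists_itvoo_notin_countable {R : realType} {B : set R} {a b : R} :
  a < b -> countable B -> exists2 x, a < x < b & ~ B x.
Proof.
move=> ab cB; apply: contrapT => noavoid.
have itv_sub : `]a, b[ `<=` B.
  move=> x; rewrite /= in_itv /= => xab; apply: contrapT => Bx.
  by apply: noavoid; exists x.
have := countable_lebesgue_measure0 (sub_countable (subset_card_le itv_sub) cB).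
rewrite lebesgue_measure_itv /= lte_fin ab -EFinD => -[] /eqP.
by rewrite subr_eq0 gt_eqF.
Qed.

Section PushCoordinatewise.
Context {R : realType} (t : nat -> R).
Hypothesis t01 : forall n, 0 <= t n < 1.

Definition pushw (f : Rw R) : Rw R := fun n => push (t n) (f n).

Definition pushw_inv (f : Rw R) : Rw R := fun n => push_inv (t n) (f n).

Lemma pushwK : cancel pushw pushw_inv.
Proof. by move=> f; apply/funext => n; rewrite /pushw_inv /pushw pushK. Qed.

Lemma pushw_invK : cancel pushw_inv pushw.
Proof. by move=> f; apply/funext => n; rewrite /pushw_inv /pushw push_invK. Qed.

Lemma Qcube_pushw f : Qcube R (pushw f) <-> Qcube R f.
Proof. by split=> Qf n; have := Qf n; rewrite /pushw push_itvcc. Qed.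

Lemma Qopen_pushw f : Qopen R (pushw f) <-> Qopen R f.
Proof. by split=> Qf n; have := Qf n; rewrite /pushw push_itvoo. Qed.

Lemma dist_pushw f n : Qcube R f -> `|pushw f n - f n| <= t n.
Proof.
move=> Qf; have [t0 _] := andP (t01 n).
by rewrite dist_push // ler_norml Qf.
Qed.

Lemma KF_pushw F f : is_free_filter F -> (forall n, t n <= 2 ^- n) ->
  KF R F (pushw f) <-> KF R F f.
Proof.
move=> Ffree t_le; split=> KFf.
- have Qf : Qcube R f by apply/Qcube_pushw; case: KFf.
  apply: (KF_perturb Ffree KFf Qf) => // n.
  by rewrite distrC (le_trans (dist_pushw _ _ Qf)).
- have Qf : Qcube R f by case: KFf.
  apply: (KF_perturb Ffree KFf (proj2 (Qcube_pushw f) Qf)) => // n.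
  exact: le_trans (dist_pushw _ _ Qf) _.
Qed.

Lemma CF_pushw F f : is_free_filter F -> (forall n, t n <= 2 ^- n) ->
  CF R F (pushw f) <-> CF R F f.
Proof.
move=> Ffree t_le.
have KFE := KF_pushw F f Ffree t_le; have QoE := Qopen_pushw f.
by split=> -[KFf Of]; split; by [apply/KFE | apply/QoE].
Qed.

Lemma homeomorphism_on_pushw : homeomorphism_on (Qcube R) pushw.
Proof.
split.
- apply: continuous_subspaceT.
  exact: continuous_ptws_map _ (fun n => continuous_push (t n)).
- by move=> f /Qcube_pushw.
exists pushw_inv; split.
- apply: continuous_subspaceT.
  exact: continuous_ptws_map _ (fun n => continuous_push_inv (t n)).
- by move=> f Qf; apply/Qcube_pushw; rewrite pushw_invK.
- by move=> f _; rewrite pushwK.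
- by move=> f _; rewrite pushw_invK.
Qed.

End PushCoordinatewise.

Lemma image_invariant {T : Type} {h g : T -> T} {A : set T} :
  cancel g h -> (forall x, A (h x) <-> A x) -> h @` A = A.
Proof.
move=> gK Ah; have AE : h @^-1` A = A by apply/seteqP; split=> x /Ah.
rewrite -{1}AE image_preimage //; apply/seteqP; split=> // x _.
by exists (g x); rewrite ?gK.
Qed.

Theorem mainTheorem13 (R : realType) (F : set (set nat))
  (D E : set (Rw R)) :
  is_free_filter F ->
  countable D -> countable E ->
  D `<=` Qopen R -> E `<=` Qopen R ->
  exists h : Rw R -> Rw R,
    [/\ homeomorphism_on (Qcube R) h,
        h @` CF R F = CF R F,
        h @` Qopen R = Qopen R &
        forall d e (n : nat), D d -> E e -> h d n <> e n].
Proof.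
move=> Ffree cD cE DQ _.
pose bad n :=
  (fun p : Rw R * Rw R => (p.2 n - p.1 n) / (1 - `|p.1 n|)) @` (D `*` E).
have bad_countable n : countable (bad n).
  exact: sub_countable (card_image_le _ _) (countableX cD cE).
have /choice[t tP] n : exists t, (0 < t < 2 ^- n) /\ ~ bad n t.
  have pos : (0 : R) < 2 ^- n by rewrite invr_gt0 exprn_gt0.
  have [x ? ?] := exists_itvoo_notin_countable pos (bad_countable n).
  by exists x.
have t01 n : 0 <= t n < 1.
  have [/andP[t0 tn] _] := tP n.
  rewrite ltW //= (lt_le_trans tn) //.
  by rewrite invf_le1 ?exprn_gt0 // exprn_ege1 ?ler1n.
have t_le n : t n <= 2 ^- n by have [/andP[_ /ltW]] := tP n.
exists (pushw t); split.
- exact: homeomorphism_on_pushw.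
- by apply: (image_invariant (pushw_invK t t01)) => f; apply: CF_pushw.
- by apply: (image_invariant (pushw_invK t t01)) => f; apply: Qopen_pushw.
- move=> d e n Dd Ee /push_eq tE; apply: (tP n).2; exists (d, e) => //=.
  by rewrite -tE // ltr_norml; apply: DQ.
Qed.
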